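(* Let $A\in\mathbb{R}^{n\times d}$ have rows $a_1^\top,\dots,a_n^\top$, let $f_1,\dots,f_n:\mathbb{R}\to\mathbb{R}$ be convex and $(1/\gamma)$-smooth ($\gamma>0$), let $g:\mathbb{R}^d\to\mathbb{R}\cup\{+\infty\}$ be closed and $\mu$-strongly convex ($\mu>0$), and let $\bar R=\max_i\|a_i\|_2$. Consider the iterates of the SDAPD method (described in the context) and the potential $\tilde\phi_t$ with $\tilde\phi_t^*=\min_x\tilde\phi_t(x)$. Fix $t\ge0$ and assume $\eta(1+B_{t-1}\mu)\ge\beta_t$. Then $$\mathbb{E}_{\mathcal{F}_t}\big[\tilde\phi_{t+1}^*-\tilde\phi_t^*\big]\ge\beta_t\,\mathbb{E}_{\mathcal{F}_t}\Big[g(\bar{x}^{t+1})+\frac1n\langle\bar{y}^{t+1},A\bar{x}^{t+1}\rangle\Big]-\frac{\bar R^2\beta_t\eta}{2}\mathbb{E}_{\mathcal{F}_t}\big[\|y^{t+1}-y^t\|_2^2\big].$$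
   Context: $f_i^*$ is the convex conjugate of $f_i$; $\operatorname{prox}_h(u)=\arg\min_v\{h(v)+\frac12\|v-u\|_2^2\}$. SDAPD method: given $x^0\in\mathbb{R}^d$, $y^0\in\mathbb{R}^n$, $\eta,\tau>0$, $\beta_t>0$, set $B_t=\sum_{k=0}^t\beta_k$ (with $B_{-1}=0$). For $t=0,1,\dots$: sample $i_t$ uniformly from $\{1,\dots,n\}$ independently of the past; $\bar{x}^{t+1}=\operatorname{prox}_{\eta g}(x^t-\frac{\eta}{n}A^\top y^t)$; $y^{t+1}_i=\operatorname{prox}_{\tau f_i^*}(y_i^t+\tau\langle a_i,\bar{x}^{t+1}\rangle)$ if $i=i_t$, $y^{t+1}_i=y^t_i$ otherwise; $\bar{y}^{t+1}=y^t+n(y^{t+1}-y^t)$; $x^{t+1}=\operatorname{prox}_{B_tg}(x^0-\sum_{k=0}^t\frac{\beta_k}{n}A^\top\bar{y}^{k+1})$. Potential: $\tilde\phi_t(x)=\frac12\|x-x^0\|_2^2+\sum_{k=0}^{t-1}\beta_k\big(g(x)+\frac1n\langle\bar{y}^{k+1},Ax\rangle\big)$. $\mathcal{F}_t$ is the $\sigma$-field generated by all random variables up to iteration $t$ (so $x^t,y^t$ are $\mathcal{F}_t$-measurable and $i_t$ is independent of $\mathcal{F}_t$), and $\mathbb{E}_{\mathcal{F}_t}$ denotes conditional expectation given $\mathcal{F}_t$. *)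

From HB Require Import structures.
From mathcomp Require Import all_boot all_order all_algebra.
From mathcomp Require Import all_classical all_reals all_analysis.
Set Implicit Arguments. Unset Strict Implicit. Unset Printing Implicit Defensive.
Import Order.TTheory GRing.Theory Num.Theory.
Local Open Scope classical_set_scope.
Local Open Scope ring_scope.

Section SDAPD.
Variable R : realType.

Definition dotv (m : nat) (u v : 'cV[R]_m) : R := \sum_(i < m) u i 0 * v i 0.
Definition sqnorm (m : nat) (u : 'cV[R]_m) : R := dotv u u.
Definition norm2 (m : nat) (u : 'cV[R]_m) : R := Num.sqrt (sqnorm u).

Definition convex_fun (f : R -> R) : Prop :=
  forall (x y l : R), 0 <= l -> l <= 1 ->
    f (l * x + (1 - l) * y) <= l * f x + (1 - l) * f y.

Definition smooth_fun (L : R) (f : R -> R) : Prop :=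
  (forall x : R, derivable f x 1) /\
  (forall x y : R, `| derive1 f x - derive1 f y | <= L * `| x - y |).

Definition ext_valued (d : nat) (g : 'cV[R]_d -> \bar R) : Prop :=
  forall x, g x != -oo%E.

Definition proper_fun (d : nat) (g : 'cV[R]_d -> \bar R) : Prop :=
  exists x, (g x < +oo)%E.

(* closed = lower semicontinuous = all sublevel sets closed (in R^d) *)
Definition closed_fun (d : nat) (g : 'cV[R]_d -> \bar R) : Prop :=
  forall a : R, closed ([set x : 'cV[R^o]_d | (g x <= a%:E)%E]).

Definition strongly_convex (d : nat) (mu : R) (g : 'cV[R]_d -> \bar R) : Prop :=
  forall (x y : 'cV[R]_d) (l : R), 0 <= l -> l <= 1 ->
    (g (l *: x + (1 - l) *: y)%R <=
      l%:E * g x + (1 - l)%:E * g y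
      - (mu / 2 * l * (1 - l) * sqnorm (x - y))%:E)%E.

Definition fconj (f : R -> R) (v : R) : \bar R :=
  ereal_sup [set ((v * x - f x)%:E) | x in [set: R]].

(* prox_{c h}(u) = argmin_v { c h(v) + 1/2 ||v - u||^2 }  (on R^m; the minimizer,
   which exists and is unique in all uses below) *)
Definition proxv (m : nat) (c : R) (h : 'cV[R]_m -> \bar R) (u : 'cV[R]_m)
  : 'cV[R]_m :=
  xget 0 [set v | forall w : 'cV[R]_m,
     (c%:E * h v + (sqnorm (v - u) / 2)%:E <=
      c%:E * h w + (sqnorm (w - u) / 2)%:E)%E].

Definition proxr (c : R) (h : R -> \bar R) (u : R) : R :=
  xget 0 [set v | forall w : R,
     (c%:E * h v + ((v - u) ^+ 2 / 2)%:E <=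
      c%:E * h w + ((w - u) ^+ 2 / 2)%:E)%E].

Variables (n d : nat) (A : 'M[R]_(n, d)) (f : 'I_n -> R -> R)
  (g : 'cV[R]_d -> \bar R) (eta tau : R) (beta : nat -> R)
  (x0 : 'cV[R]_d) (y0 : 'cV[R]_n).

(* Bsum t = beta_0 + ... + beta_{t-1} = B_{t-1}   (so B_t = Bsum t.+1, B_{-1} = 0) *)
Definition Bsum (t : nat) : R := \sum_(k < t) beta k.

Definition arow (i : 'I_n) : 'cV[R]_d := (row i A)^T.

Definition Rbar : R := \big[Num.max/0]_(i < n) norm2 (arow i).

(* One step, given the index i_t = i and the state (x^t, y^t, S_t) where
   S_t = sum_{k<t} beta_k ybar^{k+1}. *)
Definition xbar_of (xt : 'cV[R]_d) (yt : 'cV[R]_n) : 'cV[R]_d :=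
  proxv eta g (xt - (eta / n%:R) *: (A^T *m yt)).

Definition y_of (i : 'I_n) (xt : 'cV[R]_d) (yt : 'cV[R]_n) : 'cV[R]_n :=
  \col_j (if j == i then
            proxr tau (fconj (f i))
              (yt i 0 + tau * dotv (arow i) (xbar_of xt yt))
          else yt j 0).

Definition ybar_of (i : 'I_n) (xt : 'cV[R]_d) (yt : 'cV[R]_n) : 'cV[R]_n :=
  yt + n%:R *: (y_of i xt yt - yt).

(* state at iteration t: (x^t, y^t, S_t); depends on s 0, ..., s (t-1),
   where s k = i_k is the index sampled at iteration k *)
Fixpoint state (s : nat -> 'I_n) (t : nat) : 'cV[R]_d * 'cV[R]_n * 'cV[R]_n :=
  match t with
  | 0 => (x0, y0, 0)
  | t'.+1 =>
      let: (xt, yt, St) := state s t' in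
      let S' := St + beta t' *: ybar_of (s t') xt yt in
      (proxv (Bsum t'.+1) g (x0 - (n%:R)^-1 *: (A^T *m S')),
       y_of (s t') xt yt, S')
  end.

Definition x_it (s : nat -> 'I_n) (t : nat) : 'cV[R]_d := (state s t).1.1.
Definition y_it (s : nat -> 'I_n) (t : nat) : 'cV[R]_n := (state s t).1.2.

(* xbar^{t+1}, ybar^{t+1} *)
Definition xbar_it (s : nat -> 'I_n) (t : nat) : 'cV[R]_d :=
  xbar_of (x_it s t) (y_it s t).
Definition ybar_it (s : nat -> 'I_n) (t : nat) : 'cV[R]_n :=
  ybar_of (s t) (x_it s t) (y_it s t).

Definition phi (s : nat -> 'I_n) (t : nat) (x : 'cV[R]_d) : \bar R :=
  ((sqnorm (x - x0) / 2)%:E +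
   \sum_(k < t) (beta k)%:E * (g x + ((n%:R)^-1 * dotv (ybar_it s k) (A *m x))%:E))%E.

Definition phistar (s : nat -> 'I_n) (t : nat) : \bar R :=
  ereal_inf [set phi s t x | x in [set: 'cV[R]_d]].

(* conditional expectation given F_t: i_t is uniform on {1..n} and
   independent of F_t = sigma(i_0,...,i_{t-1}); all quantities are functions
   of the index sequence, so E_{F_t}[X](s) averages over the value of s t. *)
Definition upd (s : nat -> 'I_n) (t : nat) (i : 'I_n) : nat -> 'I_n :=
  fun k => if k == t then i else s k.

Definition condE (t : nat) (X : (nat -> 'I_n) -> \bar R) (s : nat -> 'I_n)
  : \bar R :=
  ((n%:R)^-1%:E * \sum_(i < n) X (upd s t i))%E.

End SDAPD.

From HB Require Import structures.
From mathcomp Require Import all_boot all_order all_algebra.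
From mathcomp Require Import all_classical all_reals all_analysis.
From mathcomp Require Import ring lra.
Set Implicit Arguments. Unset Strict Implicit. Unset Printing Implicit Defensive.
Import Order.TTheory GRing.Theory Num.Theory.
Local Open Scope classical_set_scope.
Local Open Scope ring_scope.

(* For each value of the sampled index [i_t] the inequality holds pointwise; averaging over
   [i_t] gives the conditional expectation.

   Pointwise, completing the square shows that phi~_t is, up to a constant, the prox objective
   of [B_{t-1} g] whose minimiser is x^t, so strong convexity of g gives the quadratic growth
   phi~_t(w) >= phi~_t^* + (1 + B_{t-1} mu)/2 ||w - x^t||^2.  Adding beta_t (g(w) + <ybar, A w>/n)
   and using beta_t <= eta (1 + B_{t-1} mu), the three-point inequality of the prox step that
   defines xbar^{t+1} replaces w by xbar^{t+1}, up to
   beta_t (<A^T (y^{t+1} - y^t), w - xbar> + ||w - xbar||^2 / (2 eta)).  Young's inequality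
   bounds this below by -beta_t eta ||A^T (y^{t+1} - y^t)||^2 / 2, and since y^{t+1} - y^t has a
   single nonzero entry, ||A^T (y^{t+1} - y^t)|| <= Rbar ||y^{t+1} - y^t||.  Infimising over w
   gives the bound on phi~_{t+1}^*.

   The prox points exist because g is closed and strongly convex: a minimising sequence of a
   prox objective is Cauchy by strong convexity at midpoints, and its limit is a minimiser by
   lower semicontinuity. *)

Section Euclid.
Context {R : realType}.

Section Dot.
Context {m : nat}.
Implicit Types u v w : 'cV[R]_m.

Lemma dotvC u v : dotv u v = dotv v u.
Proof. by apply: eq_bigr => i _; rewrite mulrC. Qed.

Lemma dotv0l w : dotv 0 w = 0.
Proof. by rewrite /dotv big1 // => i _; rewrite mxE mul0r. Qed.

Lemma dotvDl u v w : dotv (u + v) w = dotv u w + dotv v w.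
Proof. by rewrite /dotv -big_split; apply: eq_bigr => i _; rewrite !mxE mulrDl. Qed.

Lemma dotvBl u v w : dotv (u - v) w = dotv u w - dotv v w.
Proof. by rewrite /dotv -sumrB; apply: eq_bigr => i _; rewrite !mxE mulrBl. Qed.

Lemma dotvZl a u w : dotv (a *: u) w = a * dotv u w.
Proof. by rewrite /dotv mulr_sumr; apply: eq_bigr => i _; rewrite !mxE mulrA. Qed.

Lemma dotvDr u v w : dotv w (u + v) = dotv w u + dotv w v.
Proof. by rewrite dotvC dotvDl !(dotvC w). Qed.

Lemma dotvBr u v w : dotv w (u - v) = dotv w u - dotv w v.
Proof. by rewrite dotvC dotvBl !(dotvC w). Qed.

Lemma dotvZr a u w : dotv w (a *: u) = a * dotv w u.
Proof. by rewrite dotvC dotvZl dotvC. Qed.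

Lemma dotv_suml (I : Type) (r : seq I) (P : pred I) (F : I -> 'cV[R]_m) w :
  dotv (\sum_(i <- r | P i) F i) w = \sum_(i <- r | P i) dotv (F i) w.
Proof.
elim: r => [|x r IH]; first by rewrite !big_nil dotv0l.
by rewrite !big_cons; case: (P x); rewrite ?dotvDl IH.
Qed.

Lemma sqnorm0 : sqnorm (0 : 'cV[R]_m) = 0.
Proof. exact: dotv0l. Qed.

Lemma sqnorm_ge0 u : 0 <= sqnorm u.
Proof. by apply: sumr_ge0 => i _; rewrite -expr2 sqr_ge0. Qed.

Lemma sqnormD u v : sqnorm (u + v) = sqnorm u + 2 * dotv u v + sqnorm v.
Proof. rewrite /sqnorm dotvDl !dotvDr (dotvC v u); ring. Qed.

Lemma sqnormZ a u : sqnorm (a *: u) = a ^+ 2 * sqnorm u.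
Proof. rewrite /sqnorm dotvZl dotvZr; ring. Qed.

Lemma sqr_coord_le_sqnorm u i : u i 0 ^+ 2 <= sqnorm u.
Proof.
rewrite /sqnorm /dotv (bigD1 i) //= -expr2 lerDl.
by apply: sumr_ge0 => k _; rewrite -expr2 sqr_ge0.
Qed.

Lemma norm_coord_le u i : `|u i 0| <= norm2 u.
Proof. by rewrite -sqrtr_sqr; apply/ler_wsqrtr/sqr_coord_le_sqnorm. Qed.

Lemma sqnorm_convex_comb l u v w :
  sqnorm (l *: w + (1 - l) *: v - u) =
  l * sqnorm (w - u) + (1 - l) * sqnorm (v - u) - l * (1 - l) * sqnorm (w - v).
Proof.
have -> : l *: w + (1 - l) *: v - u = (v - u) + l *: (w - v).
  by apply/matrixP => i j; rewrite !mxE; ring.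
have -> : w - u = (v - u) + (w - v) by apply/matrixP => i j; rewrite !mxE; ring.
move: (v - u) (w - v) => a b; rewrite !sqnormD sqnormZ dotvZr; ring.
Qed.

Lemma half_sqnormB_add_dotv u w a :
  sqnorm (w - u) / 2 + dotv a w = sqnorm (w - (u - a)) / 2 + (dotv u a - sqnorm a / 2).
Proof.
have -> : w - (u - a) = (w - u) + a by apply/matrixP => i j; rewrite !mxE; ring.
by rewrite [sqnorm (w - u + a)]sqnormD dotvBl (dotvC a w); field.
Qed.

(* [(b - u)^2 - (a - u)^2 = (b - a) (2 (b - u) - (b - a)) <= 2 |b - a| |b - u|] coordinatewise. *)
Lemma sqnormB_shift (a b u : 'cV[R]_m) (del : R) :
  (forall i, `|a i 0 - b i 0| <= del) ->
  sqnorm (b - u) <= sqnorm (a - u) + 2 * del * \sum_i `|b i 0 - u i 0|.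
Proof.
move=> ab_del; rewrite /sqnorm /dotv mulr_sumr -big_split /=; apply: ler_sum => i _.
rewrite !mxE.
have := ler_norm ((b i 0 - a i 0) * (b i 0 - u i 0)); rewrite normrM => le_prod.
have : `|b i 0 - a i 0| * `|b i 0 - u i 0| <= del * `|b i 0 - u i 0|.
  by rewrite ler_wpM2r // distrC.
have := sqr_ge0 (b i 0 - a i 0); nra.
Qed.

End Dot.

Lemma dotv_mulmx_trmx (p q : nat) (A : 'M[R]_(p, q)) (y : 'cV[R]_p) (w : 'cV[R]_q) :
  dotv (A^T *m y) w = dotv y (A *m w).
Proof.
rewrite /dotv; under eq_bigr do rewrite !mxE big_distrl /=.
rewrite exchange_big /=; apply: eq_bigr => i _.
rewrite !mxE big_distrr /=; apply: eq_bigr => j _; rewrite !mxE; ring.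
Qed.

Lemma sqnorm_trmx_mul_single (p q : nat) (A : 'M[R]_(p, q)) (v : 'cV[R]_p) i :
  (forall j, j != i -> v j 0 = 0) -> sqnorm (A^T *m v) <= Rbar A ^+ 2 * sqnorm v.
Proof.
move=> v_supp.
have Av_coord k : (A^T *m v) k 0 = A i k * v i 0.
  rewrite mxE (bigD1 i) //= big1 ?addr0 ?mxE // => j ji; by rewrite mxE v_supp ?mulr0.
have vE : sqnorm v = v i 0 ^+ 2.
  by rewrite /sqnorm /dotv (bigD1 i) //= big1 ?addr0 ?expr2 // => j ji; rewrite v_supp ?mul0r.
have AvE : sqnorm (A^T *m v) = v i 0 ^+ 2 * sqnorm (arow A i).
  rewrite /sqnorm /dotv mulr_sumr; apply: eq_bigr => k _; rewrite Av_coord /arow !mxE; ring.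
have row_le : sqnorm (arow A i) <= Rbar A ^+ 2.
  have norm_le : norm2 (arow A i) <= Rbar A by apply: le_bigmax.
  have := ler_pM (sqrtr_ge0 _) (sqrtr_ge0 _) norm_le norm_le.
  by rewrite -!expr2 sqr_sqrtr ?sqnorm_ge0.
by rewrite AvE vE mulrC ler_wpM2r ?sqr_ge0.
Qed.

End Euclid.

Lemma cV_cauchy_limit {R : realType} {d : nat} (xs : nat -> 'cV[R]_d) (r : nat -> R) :
  (forall k j i, `|xs k i 0 - xs j i 0| <= r k + r j) ->
  exists xl : 'cV[R]_d, forall k i, `|xs k i 0 - xl i 0| <= r k.
Proof.
move=> xs_close; pose E i := [set xs k i 0 - r k | k in [set: nat]].
exists (\col_i sup (E i)) => k i; rewrite mxE.
have ubE j : ubound (E i) (xs j i 0 + r j).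
  move=> _ [k' _ <-]; have := xs_close k' j i; rewrite ler_norml => /andP[_]; lra.
have le_sup : xs k i 0 - r k <= sup (E i).
  by apply: ub_le_sup; [exists (xs 0%N i 0 + r 0%N); exact: ubE | exists k].
have sup_le : sup (E i) <= xs k i 0 + r k.
  by apply: ge_sup; [exists (xs 0%N i 0 - r 0%N); exists 0%N | exact: ubE].
rewrite ler_norml; apply/andP; split; lra.
Qed.

Lemma nbhs_entrywise {R : realType} {d : nat} (p : 'cV[R^o]_d) (B : set 'cV[R^o]_d) :
  nbhs p B -> exists2 r : R, 0 < r &
    forall y : 'cV[R^o]_d, (forall i, `|p i 0 - y i 0| < r) -> B y.
Proof.
move=> /nbhs_ballP [r r0 pB]; exists r => // y near_y; apply: pB.
by split => // i j; rewrite (ord1 j); exact: near_y.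
Qed.

Section StronglyConvexProx.
Context {R : realType} {d : nat} (g : 'cV[R]_d -> \bar R) (mu : R).
Hypotheses (mu_gt0 : 0 < mu) (g_ext : ext_valued g) (g_proper : proper_fun g)
  (g_closed : closed_fun g) (g_sc : strongly_convex mu g).

Lemma ext_valued_cases w : g w = +oo%E \/ exists r, g w = r%:E.
Proof. by move: (g_ext w); case: (g w) => [r| |] //= _; [right; exists r | left]. Qed.

Lemma strongly_convex_fin x y l gx gy : 0 <= l -> l <= 1 ->
  g x = gx%:E -> g y = gy%:E ->
  exists gz, g (l *: x + (1 - l) *: y) = gz%:E /\
    gz <= l * gx + (1 - l) * gy - mu / 2 * l * (1 - l) * sqnorm (x - y).
Proof.
move=> l0 l1 gxE gyE; have := @g_sc x y l l0 l1; rewrite gxE gyE -!EFinM -EFinD.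
by move: (g_ext (l *: x + (1 - l) *: y)); case: (g _) => [gz| |] //= _; exists gz.
Qed.

Lemma closed_fun_locally_gt p gp : g p = gp%:E ->
  exists2 r : R, 0 < r &
    forall y : 'cV[R]_d, (forall i, `|p i 0 - y i 0| < r) -> ((gp - 1)%:E < g y)%E.
Proof.
move=> gpE.
have : nbhs (p : 'cV[R^o]_d) (~` [set x : 'cV[R^o]_d | (g x <= (gp - 1)%:E)%E]).
  apply: open_nbhs_nbhs; split; first exact/closed_openC/g_closed.
  by rewrite /= gpE lee_fin; lra.
move=> /nbhs_entrywise [r r0 near_p]; exists r => // y /near_p /negP.
by rewrite ltNge.
Qed.

Lemma closed_fun_le (xl : 'cV[R]_d) a :
  (forall r, 0 < r -> exists x : 'cV[R]_d, (forall i, `|x i 0 - xl i 0| < r) /\ (g x <= a%:E)%E) ->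
  (g xl <= a%:E)%E.
Proof.
move=> approx; apply: (@g_closed a) => B /nbhs_entrywise [r r0 rB].
have [x [x_near gx_le]] := approx r r0.
by exists x; split => //; apply: rB => i; rewrite distrC.
Qed.

(* The local bound [g > g p - 1] near [p], transported along segments from [p] by strong
   convexity, grows quadratically with the distance to [p]; its minimum over the distance is
   [g p - 2 / r - 4 / (mu r^2)]. *)
Lemma strongly_convex_lbound : exists G0 : R, forall x, (G0%:E <= g x)%E.
Proof.
have [p] := g_proper; move: (g_ext p); case gpE: (g p) => [gp| |] //= _ _.
have [r0 r0_gt0 near_p] := closed_fun_locally_gt gpE.
set r := Num.min r0 1.
have r_gt0 : 0 < r by rewrite lt_min r0_gt0 ltr01.
have r_le1 : r <= 1 by rewrite ge_min lexx orbT.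
have r_le_r0 : r <= r0 by rewrite ge_min lexx.
exists (gp - (2 * (mu * r) + 4) / (mu * r ^+ 2)) => x.
case: (ext_valued_cases x) => [-> | [gx gxE]]; first by rewrite leey.
rewrite gxE lee_fin.
set N := norm2 (x - p).
have N_ge0 : 0 <= N := sqrtr_ge0 _.
have NE : N ^+ 2 = sqnorm (x - p) by rewrite sqr_sqrtr // sqnorm_ge0.
set l := r / (2 * (1 + N)).
have l_gt0 : 0 < l by rewrite divr_gt0 //; lra.
have lE : l * (2 * (1 + N)) = r by rewrite mulfVK // gt_eqF //; lra.
have l_le_half : l <= 1 / 2 by nra.
have lN_lt : l * N < r by nra.
have gz_gt : ((gp - 1)%:E < g (l *: x + (1 - l) *: p))%E.
  apply: near_p => i.
  have -> : p i 0 - (l *: x + (1 - l) *: p) i 0 = - (l * (x - p) i 0) by rewrite !mxE; ring.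
  rewrite normrN normrM (ger0_norm (ltW l_gt0)).
  apply: le_lt_trans (lt_le_trans lN_lt r_le_r0).
  by rewrite ler_wpM2l ?(ltW l_gt0) // norm_coord_le.
have [gz [gzE gz_le]] := strongly_convex_fin (ltW l_gt0) ltac:(lra) gxE gpE.
move: gz_gt gz_le; rewrite gzE lte_fin -NE => gz_gt gz_le.
have mlN_ge0 : 0 <= mu * l * N ^+ 2 by rewrite mulr_ge0 ?sqr_ge0 // mulr_ge0 // ltW.
have gxp_l : l * (gx - gp) > -1 + mu / 4 * l * N ^+ 2 by nra.
have gxp_r : r * (gx - gp) > - (2 * (1 + N)) + mu / 4 * r * N ^+ 2 by rewrite -lE; nra.
have mr_gt0 : 0 < mu * r by rewrite mulr_gt0.
have gxp_mr : (mu * r) * (r * (gx - gp)) >= - 2 * (mu * r) - 4.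
  have := sqr_ge0 (mu * r * N / 2 - 2); nra.
have mr2_gt0 : 0 < mu * r ^+ 2 by rewrite mulr_gt0 // exprn_gt0.
rewrite -(ler_pM2r mr2_gt0) mulrBl mulfVK ?gt_eqF //; nra.
Qed.

Definition prox_obj (c : R) (u w : 'cV[R]_d) : \bar R :=
  (c%:E * g w + (sqnorm (w - u) / 2)%:E)%E.

Lemma prox_objE c u w gw : g w = gw%:E ->
  prox_obj c u w = (c * gw + sqnorm (w - u) / 2)%:E.
Proof. by rewrite /prox_obj => ->; rewrite -EFinM -EFinD. Qed.

Lemma prox_obj_pinfty c u w : 0 < c -> g w = +oo%E -> prox_obj c u w = +oo%E.
Proof. by move=> c0; rewrite /prox_obj => ->; rewrite gt0_muley ?lte_fin. Qed.

Lemma prox_obj_inf c u : 0 < c ->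
  exists mr : R, (forall w, (mr%:E <= prox_obj c u w)%E) /\
    forall e, 0 < e -> exists w gw, g w = gw%:E /\ c * gw + sqnorm (w - u) / 2 < mr + e.
Proof.
move=> c0; have [G0 G0_le] := strongly_convex_lbound.
have [p] := g_proper; move: (g_ext p); case gpE: (g p) => [gp| |] //= _ _.
set m := ereal_inf [set prox_obj c u w | w in [set: 'cV[R]_d]].
have m_le w : (m <= prox_obj c u w)%E by apply: ereal_inf_lbound; exists w.
have le_m : ((c * G0)%:E <= m)%E.
  apply: le_ereal_inf_tmp => _ [w _ <-].
  case: (ext_valued_cases w) => [/(prox_obj_pinfty u c0) -> | [gw gwE]]; first by rewrite leey.
  rewrite (prox_objE _ _ gwE) lee_fin.
  have := G0_le w; rewrite gwE lee_fin => /(ler_wpM2l (ltW c0)).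
  have := sqnorm_ge0 (w - u); lra.
have m_fin : m \is a fin_num.
  rewrite fin_numE; apply/andP; split; apply/negP => /eqP mE.
    by move: le_m; rewrite mE.
  by move: (m_le p); rewrite mE (prox_objE _ _ gpE).
exists (fine m); rewrite fineK //; split => // e e0.
have /ereal_inf_lt [_ [w _ <-] obj_lt] : (m < (fine m + e)%:E)%E.
  by rewrite -[X in (X < _)%E]fineK // lte_fin ltrDl.
case: (ext_valued_cases w) => [/(prox_obj_pinfty u c0) wE | [gw gwE]].
  by move: obj_lt; rewrite wE.
by exists w, gw; split => //; move: obj_lt; rewrite (prox_objE _ _ gwE) lte_fin.
Qed.

(* At the midpoint the objective is below the mean of the two values by [||w1 - w2||^2 / 8]. *)
Lemma prox_obj_near_min_close c u mr w1 w2 g1 g2 e1 e2 : 0 < c ->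
  (forall w, (mr%:E <= prox_obj c u w)%E) ->
  g w1 = g1%:E -> g w2 = g2%:E ->
  c * g1 + sqnorm (w1 - u) / 2 <= mr + e1 -> c * g2 + sqnorm (w2 - u) / 2 <= mr + e2 ->
  sqnorm (w1 - w2) <= 4 * (e1 + e2).
Proof.
move=> c0 mr_le g1E g2E near1 near2.
have [gm [gmE gm_le]] := strongly_convex_fin (l := 1 / 2) ltac:(lra) ltac:(lra) g1E g2E.
have := mr_le ((1 / 2) *: w1 + (1 - 1 / 2) *: w2).
rewrite (prox_objE _ _ gmE) lee_fin sqnorm_convex_comb.
have := ler_wpM2l (ltW c0) gm_le.
have : 0 <= c * mu * sqnorm (w1 - w2) by rewrite !mulr_ge0 ?sqnorm_ge0 // ltW.
nra.
Qed.

Lemma prox_obj_le_limit c u mr (xs : nat -> 'cV[R]_d) (xl : 'cV[R]_d) (r : nat -> R) :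
  0 < c -> (forall e, 0 < e -> exists k, r k < e) ->
  (forall k i, `|xs k i 0 - xl i 0| <= r k) ->
  (forall k, exists gk, g (xs k) = gk%:E /\ c * gk + sqnorm (xs k - u) / 2 <= mr + r k) ->
  (prox_obj c u xl <= mr%:E)%E.
Proof.
move=> c0 r_small xs_near xs_val.
set C := \sum_i `|xl i 0 - u i 0|.
have C_ge0 : 0 <= C by apply: sumr_ge0.
have gxl_le e : 0 < e -> (g xl <= ((mr + e - sqnorm (xl - u) / 2) / c)%:E)%E.
  move=> e0; apply: closed_fun_le => rad rad0.
  have C1_gt0 : 0 < 1 + C by lra.
  set rho := Num.min rad (e / (1 + C)).
  have rho_gt0 : 0 < rho by rewrite lt_min rad0 divr_gt0.
  have rho_rad : rho <= rad by rewrite ge_min lexx.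
  have rho_e : rho * (1 + C) <= e by rewrite -ler_pdivlMr // ge_min lexx orbT.
  have [k rk_lt] := r_small _ rho_gt0; have [gk [gkE gk_le]] := xs_val k.
  exists (xs k); split; first by move=> i; apply: le_lt_trans (xs_near k i) _; lra.
  rewrite gkE lee_fin ler_pdivlMr // mulrC.
  have := sqnormB_shift u (xs_near k); rewrite -/C; nra.
have [gl glE] : exists gl, g xl = gl%:E.
  by case: (ext_valued_cases xl) => // gxl_oo; have := gxl_le 1 ltr01; rewrite gxl_oo.
rewrite (prox_objE _ _ glE) lee_fin; apply/ler_addgt0Pr => e e0.
by have := gxl_le e e0; rewrite glE lee_fin ler_pdivlMr //; lra.
Qed.

Lemma prox_obj_min_exists c u : 0 < c -> exists v, forall w, (prox_obj c u v <= prox_obj c u w)%E.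
Proof.
move=> c0; have [mr [mr_le approx]] := prox_obj_inf u c0.
pose eps k : R := k.+1%:R^-1.
have eps_gt0 k : 0 < eps k by rewrite invr_gt0 ltr0n.
have eps_le1 k : eps k <= 1 by rewrite invf_le1 ?ltr0n ?ler1n.
have near_min k : exists x gk,
    g x = gk%:E /\ c * gk + sqnorm (x - u) / 2 < mr + eps k ^+ 2.
  by apply: approx; rewrite exprn_gt0.
have [xs xs_near] := choice near_min.
have xs_close k j i : `|xs k i 0 - xs j i 0| <= 2 * eps k + 2 * eps j.
  have [gk [gkE ltk]] := xs_near k; have [gj [gjE ltj]] := xs_near j.
  have close := prox_obj_near_min_close c0 mr_le gkE gjE (ltW ltk) (ltW ltj).
  have coord := sqr_coord_le_sqnorm (xs k - xs j) i; rewrite !mxE in coord.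
  have ek := eps_gt0 k; have ej := eps_gt0 j.
  by rewrite ler_norml; apply/andP; split; nra.
have [xl xl_near] := cV_cauchy_limit xs_close.
exists xl => w; apply: le_trans (mr_le w); apply: (prox_obj_le_limit c0 _ xl_near).
  move=> e e0; have e2_gt0 : 0 < e / 2 by rewrite divr_gt0.
  have [N _ /(_ N (leqnn N)) /= epsN_lt] := near_infty_natSinv_lt (PosNum e2_gt0).
  by exists N; rewrite -/(eps N) in epsN_lt; lra.
move=> k; have [gk [gkE gk_lt]] := xs_near k; exists gk; split => //.
by have := eps_gt0 k; have := eps_le1 k; nra.
Qed.

Lemma proxvP c u : 0 < c -> forall w, (prox_obj c u (proxv c g u) <= prox_obj c u w)%E.
Proof.
move=> c0; have [v v_min] := prox_obj_min_exists u c0.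
by apply: (xgetPex 0 (P := fun v => forall w, (prox_obj c u v <= prox_obj c u w)%E)); exists v.
Qed.

(* Compare [proxv c g u] with the points [l w + (1 - l) proxv c g u] of the segment towards [w],
   divide by [l] and let [l] tend to [0]. *)
Lemma proxv_growth c u : 0 < c ->
  exists gv, g (proxv c g u) = gv%:E /\ forall w gw, g w = gw%:E ->
    c * gv + sqnorm (proxv c g u - u) / 2 + (1 + c * mu) / 2 * sqnorm (w - proxv c g u)
      <= c * gw + sqnorm (w - u) / 2.
Proof.
move=> c0; set v := proxv c g u; have v_min := proxvP u c0.
have [gv gvE] : exists gv, g v = gv%:E.
  case: (ext_valued_cases v) => // gv_oo.
  have [p] := g_proper; move: (g_ext p); case gpE: (g p) => [gp| |] //= _ _.
  by have := v_min p; rewrite (prox_objE _ _ gpE) (prox_obj_pinfty _ c0 gv_oo).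
exists gv; split => // w gw gwE.
set D := c * gw + sqnorm (w - u) / 2 - (c * gv + sqnorm (v - u) / 2).
set K := (1 + c * mu) / 2 * sqnorm (w - v).
have K_ge0 : 0 <= K by rewrite mulr_ge0 ?sqnorm_ge0 // divr_ge0 // addr_ge0 // mulr_ge0 // ltW.
have D_ge l : 0 < l -> l < 1 -> (1 - l) * K <= D.
  move=> l0 l1.
  have [gz [gzE gz_le]] := strongly_convex_fin (ltW l0) (ltW l1) gwE gvE.
  have := v_min (l *: w + (1 - l) *: v).
  rewrite (prox_objE _ _ gvE) (prox_objE _ _ gzE) lee_fin sqnorm_convex_comb => obj_le.
  have := ler_wpM2l (ltW c0) gz_le => cgz_le.
  have : l * ((1 - l) * K) <= l * D by rewrite /D /K; nra.
  by rewrite ler_pM2l.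
suff : K <= D by rewrite /D /K; lra.
rewrite -lee_fin; apply/lee_mul01Pr => [|r /andP[r0 r1]]; first by rewrite lee_fin.
by rewrite -EFinM lee_fin; have := D_ge (1 - r); rewrite subKr; apply; lra.
Qed.

Lemma proxv_three_point c x a : 0 < c ->
  exists gv, g (proxv c g (x - c *: a)) = gv%:E /\ forall w gw, g w = gw%:E ->
    c * gv + sqnorm (proxv c g (x - c *: a) - x) / 2 + c * dotv a (proxv c g (x - c *: a) - x)
      + (1 + c * mu) / 2 * sqnorm (w - proxv c g (x - c *: a))
    <= c * gw + sqnorm (w - x) / 2 + c * dotv a (w - x).
Proof.
move=> c0; have [gv [gvE grow]] := proxv_growth (x - c *: a) c0.
exists gv; split => // w gw gwE; have := grow w gw gwE.
have expand z : sqnorm (z - (x - c *: a)) =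
    sqnorm (z - x) + 2 * (c * dotv a (z - x)) + c ^+ 2 * sqnorm a.
  have -> : z - (x - c *: a) = (z - x) + c *: a by apply/matrixP => i j; rewrite !mxE; ring.
  by rewrite sqnormD sqnormZ dotvZr dotvC.
rewrite !expand; lra.
Qed.

End StronglyConvexProx.

Section SDAPD.
Context {R : realType} {n d : nat} (A : 'M[R]_(n, d)) (f : 'I_n -> R -> R)
  (g : 'cV[R]_d -> \bar R) (eta tau : R) (beta : nat -> R)
  (x0 : 'cV[R]_d) (y0 : 'cV[R]_n).

Local Notation state := (state A f g eta tau beta x0 y0).
Local Notation x_it := (x_it A f g eta tau beta x0 y0).
Local Notation y_it := (y_it A f g eta tau beta x0 y0).
Local Notation xbar_it := (xbar_it A f g eta tau beta x0 y0).
Local Notation ybar_it := (ybar_it A f g eta tau beta x0 y0).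
Local Notation phi := (phi A f g eta tau beta x0 y0).
Local Notation phistar := (phistar A f g eta tau beta x0 y0).

Lemma state_accum s t : (state s t).2 = \sum_(k < t) beta k *: ybar_it s k.
Proof.
elim: t => [|t IH]; first by rewrite big_ord0.
rewrite big_ord_recr /= -IH /ybar_it /x_it /y_it.
by case: (state s t) => [[xt yt] St].
Qed.

Lemma x_itS s t : x_it s t.+1 =
  proxv (Bsum beta t.+1) g (x0 - (n%:R)^-1 *: (A^T *m \sum_(k < t.+1) beta k *: ybar_it s k)).
Proof. by rewrite -state_accum /x_it /=; case: (state s t) => [[xt yt] St]. Qed.

Lemma y_itS s t : y_it s t.+1 = y_of A f g eta tau (s t) (x_it s t) (y_it s t).
Proof. by rewrite /y_it /x_it /=; case: (state s t) => [[xt yt] St]. Qed.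

Lemma phiS s t x : phi s t.+1 x =
  (phi s t x + (beta t)%:E * (g x + ((n%:R)^-1 * dotv (ybar_it s t) (A *m x))%:E))%E.
Proof. by rewrite /phi big_ord_recr /= addeA. Qed.

Lemma phiE s t x gx : g x = gx%:E -> phi s t x =
  (sqnorm (x - x0) / 2 + Bsum beta t * gx
    + dotv ((n%:R)^-1 *: (A^T *m \sum_(k < t) beta k *: ybar_it s k)) x)%:E.
Proof.
move=> gxE; rewrite /phi gxE.
under eq_bigr do rewrite -EFinD -EFinM.
rewrite sumEFin -EFinD -addrA; congr (_ + _)%:E.
rewrite dotvZl dotv_mulmx_trmx dotv_suml /Bsum big_distrl mulr_sumr -big_split /=.
by apply: eq_bigr => k _; rewrite dotvZl; ring.
Qed.

Hypothesis beta_gt0 : forall k, 0 < beta k.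

Lemma Bsum_ge0 t : 0 <= Bsum beta t.
Proof. by apply: sumr_ge0 => k _; apply: ltW. Qed.

Lemma phi_pinfty s t x : g x = +oo%E -> phi s t.+1 x = +oo%E.
Proof.
move=> gxE; rewrite phiS gxE gt0_muley ?lte_fin // addey //.
rewrite /phi gxE; apply/negP => /eqP phi_noo.
suff : (0 <= (sqnorm (x - x0) / 2)%:E + \sum_(k < t) (beta k)%:E *
    (+oo + ((n%:R)^-1 * dotv (ybar_it s k) (A *m x))%:E))%E by rewrite phi_noo.
apply: adde_ge0; first by rewrite lee_fin divr_ge0 // sqnorm_ge0.
by apply: sume_ge0 => k _; rewrite gt0_muley ?lte_fin.
Qed.

Variable mu : R.
Hypotheses (mu_gt0 : 0 < mu) (g_ext : ext_valued g) (g_proper : proper_fun g)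
  (g_closed : closed_fun g) (g_sc : strongly_convex mu g).

Lemma phistar_growth s t : exists P : R, phistar s t = P%:E /\
  forall w, ((P + (1 + Bsum beta t * mu) / 2 * sqnorm (w - x_it s t))%:E <= phi s t w)%E.
Proof.
suff [P [phiP phi_ge]] : exists P, phi s t (x_it s t) = P%:E /\
    forall w, ((P + (1 + Bsum beta t * mu) / 2 * sqnorm (w - x_it s t))%:E <= phi s t w)%E.
  exists P; split => //; apply/eqP; rewrite eq_le; apply/andP; split.
    by apply: ereal_inf_lbound; exists (x_it s t).
  apply: le_ereal_inf_tmp => _ [w _ <-]; apply: le_trans (phi_ge w).
  by rewrite lee_fin lerDl mulr_ge0 ?sqnorm_ge0 // divr_ge0 // addr_ge0 // mulr_ge0 ?Bsum_ge0 ?ltW.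
case: t => [|t].
  exists 0; split; first by rewrite /phi big_ord0 adde0 subrr sqnorm0 mul0r.
  by move=> w; rewrite /phi big_ord0 adde0 /Bsum big_ord0 lee_fin mul0r addr0 add0r div1r mulrC.
set c := Bsum beta t.+1.
have c_gt0 : 0 < c by rewrite /c /Bsum big_ord_recr /= ltr_wpDl ?Bsum_ge0.
set a := (n%:R)^-1 *: (A^T *m \sum_(k < t.+1) beta k *: ybar_it s k).
have [gv [gvE grow]] := proxv_growth mu_gt0 g_ext g_proper g_closed g_sc (x0 - a) c_gt0.
rewrite -x_itS in gvE grow.
have phiE' w gw : g w = gw%:E ->
    phi s t.+1 w = (c * gw + sqnorm (w - (x0 - a)) / 2 + (dotv x0 a - sqnorm a / 2))%:E.
  move=> gwE; rewrite (phiE _ _ gwE) -/a -/c; congr _%:E.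
  by have := half_sqnormB_add_dotv x0 w a; lra.
exists (c * gv + sqnorm (x_it s t.+1 - (x0 - a)) / 2 + (dotv x0 a - sqnorm a / 2)).
split; first exact: phiE'.
move=> w; case: (ext_valued_cases g_ext w) => [/(phi_pinfty s) -> | [gw gwE]]; first exact: leey.
by rewrite (phiE' _ _ gwE) lee_fin; have := grow w gw gwE; lra.
Qed.

Lemma phistar_succ_ge s t : (0 < n)%N -> 0 < eta ->
  beta t <= eta * (1 + Bsum beta t * mu) ->
  exists G : R,
    (g (xbar_it s t) + ((n%:R)^-1 * dotv (ybar_it s t) (A *m xbar_it s t))%:E)%E = G%:E /\
    ((beta t * G - Rbar A ^+ 2 * beta t * eta / 2 * sqnorm (y_it s t.+1 - y_it s t))%:E
       <= phistar s t.+1 - phistar s t)%E.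
Proof.
move=> n_gt0 eta_gt0 step.
have [P [phistarE phi_ge]] := phistar_growth s t.
set xt := x_it s t; set yt := y_it s t; set xb := xbar_it s t.
set del := y_it s t.+1 - yt; set a := (n%:R)^-1 *: (A^T *m yt).
have xbE : xb = proxv eta g (xt - eta *: a) by rewrite /xb /xbar_it /xbar_of scalerA.
have [gb [gbE three_point]] :=
  proxv_three_point mu_gt0 g_ext g_proper g_closed g_sc xt a eta_gt0.
rewrite -xbE in gbE three_point.
have del_supp j : j != s t -> del j 0 = 0.
  by move=> j_neq; rewrite /del y_itS !mxE (negbTE j_neq) subrr.
have ybar_dot z : (n%:R)^-1 * dotv (ybar_it s t) (A *m z) = dotv a z + dotv (A^T *m del) z.
  have n_inv : (n%:R)^-1 * n%:R = 1 :> R by rewrite mulVf // pnatr_eq0 -lt0n.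
  rewrite /ybar_it /ybar_of -y_itS -/del -/xt -/yt dotvDl dotvZl mulrDr mulrA n_inv mul1r.
  by rewrite /a dotvZl !dotv_mulmx_trmx.
exists (gb + (n%:R)^-1 * dotv (ybar_it s t) (A *m xb)); split; first by rewrite gbE -EFinD.
set L := _ - _.
have phi_ge_L w : ((P + L)%:E <= phi s t.+1 w)%E.
  case: (ext_valued_cases g_ext w) => [/(phi_pinfty s t) -> | [gw gwE]]; first exact: leey.
  rewrite phiS gwE -EFinD -EFinM; apply: le_trans (leeD (phi_ge w) (lexx _)).
  rewrite -EFinD lee_fin -addrA lerD2l /L !ybar_dot -/xt.
  have beta_ge0 := ltW (beta_gt0 t).
  have := three_point w gw gwE; rewrite !dotvBr => /(ler_wpM2l beta_ge0) three_point_w.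
  have young := sqnorm_ge0 (eta *: (A^T *m del) + (w - xb)).
  rewrite sqnormD sqnormZ dotvZl dotvBr in young.
  have /(ler_wpM2l beta_ge0) young_beta := young.
  have /(ler_wpM2l (mulr_ge0 beta_ge0 (sqr_ge0 eta))) Rbar_del :=
    sqnorm_trmx_mul_single A del_supp.
  have step_w := ler_wpM2r (sqnorm_ge0 (w - xt)) step.
  have Qx_ge0 := mulr_ge0 beta_ge0 (sqnorm_ge0 (xb - xt)).
  have Qb_ge0 : 0 <= beta t * (eta * mu * sqnorm (w - xb)).
    by rewrite !mulr_ge0 ?sqnorm_ge0 // ltW.
  rewrite -(ler_pM2l eta_gt0); lra.
have : ((P + L)%:E <= phistar s t.+1)%E.
  by apply: le_ereal_inf_tmp => _ [w _ <-]; exact: phi_ge_L.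
rewrite phistarE; case: (phistar s t.+1) => [r | _ | //]; last exact: leey.
by rewrite -EFinB !lee_fin; lra.
Qed.

End SDAPD.

Theorem lemma3p2 (R : realType) (n d : nat) (A : 'M[R]_(n, d))
  (f : 'I_n -> R -> R) (g : 'cV[R]_d -> \bar R)
  (gamma mu eta tau : R) (beta : nat -> R)
  (x0 : 'cV[R]_d) (y0 : 'cV[R]_n) (t : nat) (s : nat -> 'I_n) :
  (0 < n)%N ->
  0 < gamma -> 0 < mu -> 0 < eta -> 0 < tau -> (forall k, 0 < beta k) ->
  (forall i, convex_fun (f i)) ->
  (forall i, smooth_fun gamma^-1 (f i)) ->
  ext_valued g -> proper_fun g -> closed_fun g -> strongly_convex mu g ->
  eta * (1 + Bsum beta t * mu) >= beta t ->
  (condE t (fun s' =>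
      phistar A f g eta tau beta x0 y0 s' t.+1
      - phistar A f g eta tau beta x0 y0 s' t) s >=
   (beta t)%:E *
     condE t (fun s' =>
        g (xbar_it A f g eta tau beta x0 y0 s' t)
        + ((n%:R)^-1 * dotv (ybar_it A f g eta tau beta x0 y0 s' t)
                        (A *m xbar_it A f g eta tau beta x0 y0 s' t))%:E) s
   - ((Rbar A ^+ 2 * beta t * eta / 2)%:E *
      condE t (fun s' =>
        (sqnorm (y_it A f g eta tau beta x0 y0 s' t.+1
                 - y_it A f g eta tau beta x0 y0 s' t))%:E) s))%E.
Proof.
move=> n_gt0 _ mu_gt0 eta_gt0 _ beta_gt0 _ _ g_ext g_proper g_closed g_sc step.
have [G pointwise] := choice (fun i => phistar_succ_ge A f tau x0 y0 beta_gt0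
  mu_gt0 g_ext g_proper g_closed g_sc (upd s t i) n_gt0 eta_gt0 step).
rewrite /condE; under eq_bigr => i _ do rewrite (proj1 (pointwise i)).
rewrite !sumEFin -!EFinM -EFinB.
apply: le_trans (lee_wpmul2l _ (lee_sum _ (fun i _ => proj2 (pointwise i)))).
  by rewrite sumEFin -EFinM lee_fin sumrB -!mulr_sumr; lra.
by rewrite lee_fin invr_ge0.
Qed.
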